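(* Let $N\ge 3$, $K\ge 2$ and $L$ be integers with $1\le L<N-1$, let $M=N(L+1)^{K-1}$, and define costs $d_m=L$ for $m\in[1:N]$ and $d_m=L+1$ for $m\in[N+1:M]$. Let $C=\left(\sum_{k=0}^{K-1}N^{-k}\right)^{-1}$ and $1\le D\le 1/C$. Let $\mathcal{F}_D$ be the set of probability vectors $P=(p_1,\dots,p_M)$ with $\frac1L\sum_{m=1}^M p_md_m=D$, and $U$ the uniform distribution on $[1:M]$. (i) For every $0<\alpha<\infty$ (including $\alpha=1$), the unique minimizer of $D_\alpha(P\|U)$ over $\mathcal{F}_D$ is $$p_m=\begin{cases}\dfrac{1-L(D-1)}{N}, & m\in[1:N],\\[2mm]\dfrac{L(D-1)}{N(L+1)^{K-1}-N}, & m\in[N+1:M].\end{cases}$$ (ii) For $\alpha=\infty$, $P\in\mathcal{F}_D$ minimizes $D_\infty(P\|U)$ over $\mathcal{F}_D$ if and only if $p_m=\frac{1-L(D-1)}{N}$ for all $m\in[1:N]$ and $(p_m)_{m\in[N+1:M]}$ is any nonnegative vector with $\sum_{m=N+1}^{M}p_m=L(D-1)$ and $p_m\le\frac{1-L(D-1)}{N}$ for each $m\in[N+1:M]$.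
   Context: Notation: $[i:j]=\{i,\dots,j\}$; natural logarithms. Rényi divergence for probability vectors $P,U$ on $[1:M]$ with $u_m>0$: $D_\alpha(P\|U)=\frac{1}{\alpha-1}\log\sum_m p_m^\alpha u_m^{1-\alpha}$ for $0<\alpha<\infty,\alpha\ne1$; $D_1(P\|U)=\sum_m p_m\log\frac{p_m}{u_m}$ (with $0\log0=0$); $D_\infty(P\|U)=\log\max_m\frac{p_m}{u_m}$. (Interpretation: the $N(L+1)^{K-1}$ query options of the paper's alternative probabilistic PIR scheme with $N$ databases, $K$ messages and message length $L$; the first $N$ options have download cost $L$, the rest $L+1$; $D$ is the expected download cost normalized by $L$.) *)

From HB Require Import structures.
From mathcomp Require Import all_boot all_order all_algebra.
From mathcomp Require Import all_classical all_reals all_analysis.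
Set Implicit Arguments. Unset Strict Implicit. Unset Printing Implicit Defensive.
Import Order.TTheory GRing.Theory Num.Theory.
Local Open Scope ring_scope.

(* M = N (L+1)^(K-1) query options, indexed 0..M-1 (paper's m = index+1). *)
Definition Mdim (N K L : nat) : nat := (N * L.+1 ^ K.-1)%N.

Section Defs.
Variable R : realType.

Definition dcost (N L : nat) (m : nat) : R :=
  if (m < N)%N then L%:R else L.+1%:R.

Definition is_prob (M : nat) (P : 'I_M -> R) : Prop :=
  (forall m, 0 <= P m) /\ \sum_(m < M) P m = 1.

Definition FD (N K L : nat) (D : R) (P : 'I_(Mdim N K L) -> R) : Prop :=
  is_prob P /\ (\sum_(m < Mdim N K L) P m * dcost N L m) / L%:R = D.

Definition unif (M : nat) : 'I_M -> R := fun _ => (M%:R)^-1.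

Definition renyi (M : nat) (a : R) (P U : 'I_M -> R) : R :=
  if a == 1 then \sum_(m < M) (if P m == 0 then 0 else P m * ln (P m / U m))
  else (a - 1)^-1 * ln (\sum_(m < M) (P m `^ a) * (U m `^ (1 - a))).

Definition renyi_inf (M : nat) (P U : 'I_M -> R) : R :=
  ln (\big[Num.max/0]_(m < M) (P m / U m)).

Definition Pstar (N K L : nat) (D : R) : 'I_(Mdim N K L) -> R :=
  fun m => if (m < N)%N then (1 - L%:R * (D - 1)) / N%:R
           else L%:R * (D - 1) / ((Mdim N K L)%:R - N%:R).

End Defs.

Arguments dcost {R} N L m.
Arguments FD {R} N K L D P.
Arguments Pstar {R} N K L D m.
Arguments unif {R} M _.

From HB Require Import structures.
From mathcomp Require Import all_boot all_order all_algebra.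
From mathcomp Require Import all_classical all_reals all_analysis.
From mathcomp Require Import ring lra zify.
Import Order.TTheory GRing.Theory Num.Theory.
Local Open Scope ring_scope.

(* Put [x = L (D - 1)]. The cost is [L] on the [N] cheap options and [L + 1]
   on the [M - N] others, so a probability vector lies in [F_D] iff it puts
   mass [1 - x] on the cheap block and [x] on the expensive one ([FD_iff]);
   [Pstar] spreads these two masses uniformly over their blocks.

   (i) [D_1(P||U) = \sum_m g (P m)] with [g y = y ln (M y)], and for [a != 1]
   the divergence [D_a(P||U)] is ordered like [\sum_m P m ^ a / (a - 1)]
   ([renyi_unif_leE]). Both integrands have a strict supporting line at
   every [c > 0] (strict Bernoulli / weighted AM-GM inequalities, all derived
   from [ln z < z - 1]), so Jensen's inequality on each of the two blocks
   ([two_block_min]) makes [Pstar] the unique minimizer ([renyi_Pstar_min]).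

   (ii) [D_oo(P||U) = ln (M max_m P m)]. Every [P] in [F_D] has a cheap
   option of probability at least [ph = (1 - x) / N], while [Pstar <= ph]
   ([pt_le_ph]); so the minimizers are the [P] in [F_D] bounded by [ph]
   ([renyi_inf_min_iff]), i.e. equal to [ph] on the cheap block and bounded
   by [ph] on the expensive one ([bounded_FD_iff]). *)

Section SupportingLines.
Context {R : realType}.

Definition supports (g : R -> R) (c : R) : Prop :=
  exists b : R, forall x, 0 <= x -> x != c -> g c + b * (x - c) < g x.

Lemma supportsW (g : R -> R) (c b : R) :
  (forall x, 0 <= x -> x != c -> g c + b * (x - c) < g x) ->
  forall x, 0 <= x -> g c + b * (x - c) <= g x.
Proof.
move=> gt x x0; have [->|xc] := eqVneq x c; first by rewrite subrr mulr0 addr0.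
exact/ltW/gt.
Qed.

Lemma ln_lt_subr1 {z : R} : 0 < z -> z != 1 -> ln z < z - 1.
Proof.
move=> z0 z1; have lnz : ln z != 0 by rewrite ln_eq0.
by have := expR_gt1Dx lnz; rewrite lnK ?posrE //; lra.
Qed.

Lemma ln_le_subr1 {z : R} : 0 < z -> ln z <= z - 1.
Proof.
move=> z0; have [->|z1] := eqVneq z 1; first by rewrite ln1 subrr.
exact/ltW/ln_lt_subr1.
Qed.

(* Strict weighted AM-GM: [y^a * 1^(1-a) < a y + (1 - a)] for 0 < a < 1,
   obtained by applying [ln z < z - 1] to [y/t] and [1/t], [t] the mean. *)
Lemma powR_lt_affine {a y : R} : 0 < a -> a < 1 -> 0 <= y -> y != 1 ->
  y `^ a < 1 + a * (y - 1).
Proof.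
move=> a0 a1 y0 y1; have [->|yn0] := eqVneq y 0.
  by rewrite powR0 ?gt_eqF //; lra.
have yp : 0 < y by rewrite lt_neqAle eq_sym yn0.
set t := 1 + a * (y - 1); have tp : 0 < t by rewrite /t; nra.
have lnt : a * ln y - ln t = a * ln (y / t) + (1 - a) * ln (1 / t).
  by rewrite !ln_div ?posrE // ln1; ring.
have mean : a * (y / t - 1) + (1 - a) * (1 / t - 1) = 0.
  by rewrite /t; field; rewrite -/t gt_eqF.
have slack : a * ln (y / t) + (1 - a) * ln (1 / t) < 0.
  rewrite -mean; have [yt|yt] := eqVneq (y / t) 1.
  - have t1 : 1 / t != 1.
      apply: (contraNneq _ y1) => /eqP; rewrite div1r invr_eq1 => /eqP t1.
      by move: yt; rewrite t1 divr1 => ->.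
    apply: ler_ltD; first by rewrite yt ln1 subrr.
    by rewrite ltr_pM2l ?subr_gt0 //; apply: ln_lt_subr1; rewrite ?divr_gt0.
  - apply: ltr_leD.
      by rewrite ltr_pM2l //; apply: ln_lt_subr1; rewrite ?divr_gt0.
    by apply: ler_wpM2l; [lra | apply: ln_le_subr1; rewrite divr_gt0].
by rewrite -ltr_ln ?posrE ?powR_gt0 // ln_powR; lra.
Qed.

(* Strict Bernoulli inequality for real exponents [a > 1], by inverting the
   exponent in the previous lemma. *)
Lemma powR_gt_affine {a y : R} : 1 < a -> 0 <= y -> y != 1 ->
  1 + a * (y - 1) < y `^ a.
Proof.
move=> a1 y0 y1; have a0 : 0 < a by lra.
have ya1 : y `^ a != 1 by rewrite powR_eq1 (negbTE y1) /= ltNge y0 /= gt_eqF.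
have ia0 : 0 < a^-1 by rewrite invr_gt0.
have ia1 : a^-1 < 1 by rewrite invf_lt1.
have := powR_lt_affine ia0 ia1 (powR_ge0 y a) ya1.
rewrite -powRrM mulfV ?gt_eqF // powRr1 // -(ltr_pM2l a0) mulrDr mulrA.
by rewrite mulfV ?gt_eqF //; lra.
Qed.

Lemma powR_div_gt_affine {a y : R} : 0 < a -> a != 1 -> 0 <= y -> y != 1 ->
  (1 + a * (y - 1)) / (a - 1) < y `^ a / (a - 1).
Proof.
move=> a0 a1 y0 y1.
have [alt|agt|a_1] := ltrgtP a 1; last by rewrite a_1 eqxx in a1.
- rewrite ltr_nM2r ?invr_lt0 ?subr_lt0 //; exact: powR_lt_affine.
- rewrite ltr_pM2r ?invr_gt0 ?subr_gt0 //; exact: powR_gt_affine.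
Qed.

(* [x^a / (a - 1)] has a strict supporting line at every [c > 0]; by
   homogeneity this is the previous lemma applied to [x / c]. *)
Lemma supports_powR {a c : R} : 0 < a -> a != 1 -> 0 < c ->
  supports (fun x => x `^ a / (a - 1)) c.
Proof.
move=> a0 a1 c0; exists (c `^ a * a / c / (a - 1)) => x x0 xc.
have y0 : 0 <= x / c by rewrite divr_ge0 // ltW.
have xE : x = c * (x / c) by rewrite mulrCA mulfV ?gt_eqF ?mulr1.
have y1 : x / c != 1 by apply: contraNneq xc => y1; rewrite xE y1 mulr1.
have xa : x `^ a = c `^ a * (x / c) `^ a by rewrite {1}xE powRM // ltW.
have -> : c `^ a / (a - 1) + c `^ a * a / c / (a - 1) * (x - c) =
          c `^ a * ((1 + a * (x / c - 1)) / (a - 1)).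
  by field; rewrite subr_eq0 a1 gt_eqF.
rewrite xa -mulrA ltr_pM2l ?powR_gt0 //; exact: powR_div_gt_affine.
Qed.

Lemma supports_xlnx {k c : R} : 0 < k -> 0 < c ->
  supports (fun x => if x == 0 then 0 else x * ln (x / k)) c.
Proof.
move=> k0 c0; exists (ln (c / k) + 1) => x x0 xc /=; rewrite gt_eqF //.
have [->|xn0] := eqVneq x 0; first lra.
have xp : 0 < x by rewrite lt_neqAle eq_sym xn0.
have cx1 : c / x != 1.
  by apply: contraNneq xc => cx1; rewrite -[c](mulfVK xn0) cx1 mul1r.
have := ln_lt_subr1 (divr_gt0 c0 xp) cx1.
rewrite -(ltr_pM2l xp) mulrBr mulrCA mulfV ?gt_eqF // mulr1 !ln_div ?posrE //.
lra.
Qed.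

Lemma sum_supports_min {I : finType} {A : pred I} {g : R -> R} {x : I -> R}
    {c : R} :
  0 <= c -> (0 < c -> supports g c) -> (forall i, A i -> 0 <= x i) ->
  \sum_(i | A i) x i = \sum_(i | A i) c ->
  \sum_(i | A i) g c <= \sum_(i | A i) g (x i) /\
  (\sum_(i | A i) g (x i) = \sum_(i | A i) g c -> forall i, A i -> x i = c).
Proof.
move=> c0 gc x0 sx; have [c_eq0|cn0] := eqVneq c 0.
  have xE i : A i -> x i = c.
    by move: sx; rewrite c_eq0 big1_eq => /psumr_eq0P; apply.
  by rewrite (eq_bigr _ (fun i Ai => congr1 g (xE i Ai))).
have cp : 0 < c by rewrite lt_neqAle eq_sym cn0.
have [b gb] := gc cp.
have below i : A i -> g c + b * (x i - c) <= g (x i).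
  by move=> Ai; apply: supportsW gb _ (x0 i Ai).
have line : \sum_(i | A i) (g c + b * (x i - c)) = \sum_(i | A i) g c.
  by rewrite big_split /= -mulr_sumr sumrB sx subrr mulr0 addr0.
split => [|eq_g i Ai]; first by rewrite -line; exact: ler_sum.
have gap0 : \sum_(i | A i) (g (x i) - (g c + b * (x i - c))) = 0.
  by rewrite sumrB line eq_g subrr.
have gap_ge0 j : A j -> 0 <= g (x j) - (g c + b * (x j - c)).
  by move=> Aj; rewrite subr_ge0 below.
have /eqP := psumr_eq0P gap_ge0 gap0 Ai.
apply: contraTeq => xc; rewrite subr_eq0 gt_eqF //; exact: gb (x0 i Ai) xc.
Qed.

Lemma two_block_min {I : finType} {A : pred I} {g : R -> R} {x y : I -> R}
    {c1 c2 : R} :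
  0 <= c1 -> 0 <= c2 -> (forall c, 0 < c -> supports g c) ->
  (forall i, y i = if A i then c1 else c2) -> (forall i, 0 <= x i) ->
  \sum_(i | A i) x i = \sum_(i | A i) c1 ->
  \sum_(i | ~~ A i) x i = \sum_(i | ~~ A i) c2 ->
  \sum_i g (y i) <= \sum_i g (x i) /\
  (\sum_i g (x i) = \sum_i g (y i) -> forall i, x i = y i).
Proof.
move=> c1_ge0 c2_ge0 g_supp yE x0 sx1 sx2.
have [le1 eq1] := sum_supports_min c1_ge0 (g_supp c1) (fun i _ => x0 i) sx1.
have [le2 eq2] := sum_supports_min c2_ge0 (g_supp c2) (fun i _ => x0 i) sx2.
have y1 : \sum_(i | A i) g (y i) = \sum_(i | A i) g c1.
  by apply: eq_bigr => i Ai; rewrite yE Ai.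
have y2 : \sum_(i | ~~ A i) g (y i) = \sum_(i | ~~ A i) g c2.
  by apply: eq_bigr => i Ai; rewrite yE (negbTE Ai).
rewrite [\sum_i g (y i)](bigID A) [\sum_i g (x i)](bigID A) /= y1 y2.
split=> [|eq_g i]; first exact: lerD.
have [Ai|nAi] := boolP (A i); rewrite yE ?Ai ?(negbTE nAi).
- by apply: eq1 => //; apply/eqP; rewrite eq_le le1 andbT; lra.
- by apply: eq2 => //; apply/eqP; rewrite eq_le le2 andbT; lra.
Qed.

Lemma exists_ge_const {I : finType} {A : pred I} {x : I -> R} {c : R} :
  (exists i, A i) -> \sum_(i | A i) x i = \sum_(i | A i) c ->
  exists i, A i /\ c <= x i.
Proof.
move=> [i0 Ai0] sx; apply/not_existsP => /(_ _) small.
have : \sum_(i | A i) x i < \sum_(i | A i) c.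
  apply: ltr_sum => [|i Ai].
    by apply/hasP; exists i0; rewrite ?mem_index_enum.
  by rewrite ltNge; apply/negP => cx; apply: (small i).
by rewrite sx ltxx.
Qed.

End SupportingLines.

Section RenyiUniform.
Context {R : realType}.

Lemma prob_dim_gt0 {M : nat} {P : 'I_M -> R} : is_prob P -> (0 < M)%N.
Proof.
by case: M P => // P [_]; rewrite big_ord0 => /eqP; rewrite eq_sym oner_eq0.
Qed.

Lemma powR_sum_gt0 (M : nat) (P : 'I_M -> R) (a : R) :
  is_prob P -> 0 < \sum_m P m `^ a.
Proof.
move=> [P0 P1]; have : \sum_m P m != 0 by rewrite P1 oner_neq0.
rewrite psumr_neq0 // => /hasP [m _ /= Pm].
rewrite (bigD1 m) //= ltr_pwDl ?powR_gt0 //.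
by apply: sumr_ge0 => i _; exact: powR_ge0.
Qed.

Lemma scaled_ln_leE (a k s t : R) : a != 1 -> 0 < k -> 0 < s -> 0 < t ->
  ((a - 1)^-1 * ln (s * k) <= (a - 1)^-1 * ln (t * k)) =
  (s / (a - 1) <= t / (a - 1)).
Proof.
move=> a1 k0 s0 t0; have sk : s * k \is Num.pos by rewrite posrE mulr_gt0.
have tk : t * k \is Num.pos by rewrite posrE mulr_gt0.
have [alt|agt|a_1] := ltrgtP a 1; last by rewrite a_1 eqxx in a1.
- have an : (a - 1)^-1 < 0 by rewrite invr_lt0 subr_lt0.
  by rewrite ler_nM2l // ler_ln // ler_pM2r // ler_nM2r.
- have ap : 0 < (a - 1)^-1 by rewrite invr_gt0 subr_gt0.
  by rewrite ler_pM2l // ler_ln // ler_pM2r // ler_pM2r.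
Qed.

Lemma renyi_unif_leE (M : nat) (a : R) (P Q : 'I_M -> R) :
  a != 1 -> is_prob P -> is_prob Q ->
  (renyi a P (unif M) <= renyi a Q (unif M)) =
  (\sum_m P m `^ a / (a - 1) <= \sum_m Q m `^ a / (a - 1)).
Proof.
move=> a1 hP hQ; rewrite /renyi /unif (negbTE a1) -!mulr_suml.
have M0 := prob_dim_gt0 hP.
apply: scaled_ln_leE; rewrite ?powR_sum_gt0 // powR_gt0 // invr_gt0 ltr0n //.
Qed.

End RenyiUniform.

Lemma geom_sum_inv {R : realType} (N K : nat) : (0 < N)%N ->
  (N%:R - 1) * \sum_(k < K) (N%:R ^+ k)^-1 + N%:R / N%:R ^+ K = N%:R :> R.
Proof.
move=> N0; have N0' : N%:R != 0 :> R by rewrite pnatr_eq0 -lt0n.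
elim: K => [|K IH]; first by rewrite big_ord0 mulr0 add0r expr0 divr1.
rewrite big_ord_recr /= -[in RHS]IH exprS.
by field; rewrite expf_neq0 // N0'.
Qed.

Section QueryDistributions.
Context {R : realType} {N K L : nat} {D : R}.
Hypotheses (hN : (3 <= N)%N) (hK : (2 <= K)%N) (hL1 : (1 <= L)%N)
  (hL2 : (L < N - 1)%N) (hD1 : 1 <= D)
  (hD2 : D <= \sum_(k < K) (N%:R ^+ k)^-1).

Let M := Mdim N K L.
Let nN : R := N%:R.
Let nL : R := L%:R.
Let nM : R := M%:R.
(* [x] is the total mass a distribution of [F_D] puts on the [M - N]
   expensive options; [ph] and [pt] are the values of [Pstar] on the cheap
   and on the expensive options. *)
Let x : R := nL * (D - 1).
Let ph : R := (1 - x) / nN.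
Let pt : R := x / (nM - nN).

Lemma PstarE (m : 'I_M) : Pstar N K L D m = if (m < N)%N then ph else pt.
Proof. by []. Qed.

(* The upper bound [D <= 1/C] only enters through [(N - 1)(D - 1) <= 1]. *)
Lemma D_sub1_le : (nN - 1) * (D - 1) <= 1.
Proof.
have := @geom_sum_inv R N K (ltnW (ltnW hN)); rewrite -/nN.
have : 0 <= nN / nN ^+ K by rewrite divr_ge0 ?exprn_ge0 ?ler0n.
have : 3 <= nN by rewrite (ler_nat R 3 N).
move: hD2; rewrite -/nN; set S := \sum_(k < K) _; nra.
Qed.

Lemma x_ge0 : 0 <= x.
Proof. by rewrite mulr_ge0 ?ler0n ?subr_ge0. Qed.

(* Since [L + 2 <= N], the expensive mass is at most [L / (L + 1)]. *)
Lemma x_mulLS_le : x * (nL + 1) <= nL.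
Proof.
have LN : nL + 2 <= nN.
  by rewrite /nL /nN -[2]/(2%:R) -natrD ler_nat; lia.
have := D_sub1_le; have : 1 <= nL by rewrite (ler_nat R 1 L).
rewrite /x; nra.
Qed.

Lemma x_lt1 : x < 1.
Proof.
have := x_mulLS_le; have := x_ge0; have : 1 <= nL by rewrite (ler_nat R 1 L).
nra.
Qed.

Lemma ph_gt0 : 0 < ph.
Proof.
have N0 : 0 < nN by rewrite ltr0n; lia.
by rewrite divr_gt0 // subr_gt0 x_lt1.
Qed.

Lemma nM_eq : nM = nN * (nL + 1) ^+ K.-1.
Proof. by rewrite /nM /M /Mdim natrM natrX -natr1. Qed.

Lemma LS_le_pow : nL + 1 <= (nL + 1) ^+ K.-1.
Proof. by rewrite ler_eXnr ?lerDr ?ler0n //; lia. Qed.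

Lemma tail_size_gt0 : 0 < nM - nN.
Proof.
rewrite nM_eq; have := LS_le_pow; have : 1 <= nL by rewrite (ler_nat R 1 L).
have : 3 <= nN by rewrite (ler_nat R 3 N).
nra.
Qed.

Lemma nM_gt0 : 0 < nM.
Proof. have := tail_size_gt0; have : 0 <= nN by rewrite ler0n. lra. Qed.

Lemma pt_ge0 : 0 <= pt.
Proof. by rewrite divr_ge0 ?x_ge0 // ltW ?tail_size_gt0. Qed.

Lemma pt_le_ph : pt <= ph.
Proof.
have := tail_size_gt0; rewrite -subr_ge0 /ph /pt nM_eq.
set Q := (nL + 1) ^+ K.-1 => tail0.
have N0 : 0 < nN by rewrite ltr0n; lia.
have Q1 : 0 < Q - 1.
  by move: tail0; rewrite -[X in _ - X]mulr1 -mulrBr pmulr_rgt0.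
have -> : (1 - x) / nN - x / (nN * Q - nN) = (Q * (1 - x) - 1) / (nN * (Q - 1)).
  by field; rewrite !gt_eqF.
apply: divr_ge0; last by rewrite mulr_ge0 ?ltW.
have := x_mulLS_le; have := LS_le_pow; have := x_lt1; rewrite -/Q; nra.
Qed.

Lemma sum_head_const (c : R) : \sum_(m < M | (m < N)%N) c = nN * c.
Proof.
have NM : (N <= M)%N by rewrite /M /Mdim leq_pmulr // expn_gt0.
rewrite -(big_ord_widen M (fun _ => c) NM).
by rewrite big_const_ord iter_addr_0 mulr_natl.
Qed.

Lemma sum_tail_const (c : R) : \sum_(m < M | ~~ (m < N)%N) c = (nM - nN) * c.
Proof.
have : \sum_(m < M) c = nM * c by rewrite sumr_const card_ord mulr_natl.
rewrite (bigID (fun m : 'I_M => (m < N)%N)) /= sum_head_const => total.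
by rewrite mulrBl -total; ring.
Qed.

Lemma head_sum_ph : \sum_(m < M | (m < N)%N) ph = 1 - x.
Proof. by rewrite sum_head_const /ph mulrC divfK // pnatr_eq0 -lt0n; lia. Qed.

Lemma tail_sum_pt : \sum_(m < M | ~~ (m < N)%N) pt = x.
Proof. by rewrite sum_tail_const /pt mulrC divfK ?gt_eqF ?tail_size_gt0. Qed.

Lemma expected_cost (P : 'I_M -> R) :
  \sum_m P m * dcost N L m =
  nL * \sum_m P m + \sum_(m < M | ~~ (m < N)%N) P m.
Proof.
rewrite mulr_sumr [LHS](bigID (fun m : 'I_M => (m < N)%N))
  [\sum_m nL * P m](bigID (fun m : 'I_M => (m < N)%N)) /= -addrA.
congr (_ + _); first by apply: eq_bigr => m hm; rewrite /dcost hm mulrC.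
rewrite -big_split /=; apply: eq_bigr => m hm.
by rewrite /dcost (negbTE hm) -natr1 /nL; ring.
Qed.

Lemma FD_iff (P : 'I_M -> R) : FD N K L D P <->
  (forall m, 0 <= P m) /\
  \sum_(m < M | (m < N)%N) P m = \sum_(m < M | (m < N)%N) ph /\
  \sum_(m < M | ~~ (m < N)%N) P m = \sum_(m < M | ~~ (m < N)%N) pt.
Proof.
have nL0 : nL != 0 by rewrite pnatr_eq0 -lt0n.
rewrite head_sum_ph tail_sum_pt.
rewrite /FD /is_prob expected_cost (bigID (fun m : 'I_M => (m < N)%N)) /=.
set tail := \sum_(m < M | ~~ _) P m.
split=> [[[P0 P1] cost]|[P0 [-> ->]]].
- rewrite P1 mulr1 in cost.
  have : nL + tail = D * nL by rewrite -cost divfK.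
  by rewrite /x; split=> //; split; lra.
- by rewrite subrK mulr1 /x; split=> //; field.
Qed.

Lemma Pstar_FD : FD N K L D (Pstar N K L D).
Proof.
apply/FD_iff; split=> [m|].
  by rewrite PstarE; case: ifP => _; [exact: ltW ph_gt0 | exact: pt_ge0].
by split; apply: eq_bigr => m hm; rewrite PstarE ?hm ?(negbTE hm).
Qed.

Lemma Pstar_min (g : R -> R) (P : 'I_M -> R) :
  (forall c, 0 < c -> supports g c) -> FD N K L D P ->
  \sum_m g (Pstar N K L D m) <= \sum_m g (P m) /\
  (\sum_m g (P m) = \sum_m g (Pstar N K L D m) ->
     forall m, P m = Pstar N K L D m).
Proof.
move=> g_supp /FD_iff [P0 [Ph Pt]].
exact: two_block_min (ltW ph_gt0) pt_ge0 g_supp PstarE P0 Ph Pt.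
Qed.

Lemma renyi_Pstar_min (a : R) (P : 'I_M -> R) : 0 < a -> FD N K L D P ->
  renyi a (Pstar N K L D) (unif M) <= renyi a P (unif M) /\
  (renyi a P (unif M) = renyi a (Pstar N K L D) (unif M) ->
     forall m, P m = Pstar N K L D m).
Proof.
move=> a0 hP; have [->|a1] := eqVneq a 1.
  have M0 : 0 < nM^-1 by rewrite invr_gt0 nM_gt0.
  rewrite /renyi eqxx /unif.
  exact: Pstar_min (fun y => if y == 0 then 0 else y * ln (y / nM^-1)) P
    (fun c => supports_xlnx M0) hP.
have [le_g eq_g] := Pstar_min (fun y => y `^ a / (a - 1)) P
  (fun c => supports_powR a0 a1) hP.
rewrite renyi_unif_leE //; [|exact: Pstar_FD.1 | exact: hP.1].
split=> // eq_renyi; apply: eq_g; apply/eqP; rewrite eq_le le_g andbT.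
by rewrite -renyi_unif_leE ?eq_renyi //; [exact: hP.1 | exact: Pstar_FD.1].
Qed.

(* [r = ph / U m] is the smallest possible value of [max_m P m / U m] over
   [F_D], attained exactly by the distributions bounded by [ph]. *)
Let r : R := ph / nM^-1.

Lemma r_gt0 : 0 < r.
Proof. by rewrite divr_gt0 ?ph_gt0 // invr_gt0 nM_gt0. Qed.

Lemma max_ratio_le (P : 'I_M -> R) :
  \big[Num.max/0]_m (P m / unif M m) <= r <-> forall m, P m <= ph.
Proof.
have M0 : 0 < nM^-1^-1 by rewrite invrK nM_gt0.
have leE m : (P m / unif M m <= r) = (P m <= ph) by rewrite ler_pM2r.
split=> [/bigmax_leP [_ P_le] m | P_le]; first by rewrite -leE; exact: P_le.
by apply/bigmax_leP; split=> [|m _]; [exact: ltW r_gt0 | rewrite leE].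
Qed.

(* Every [Q] in [F_D] has a cheap option of probability at least [ph]. *)
Lemma r_le_max_ratio (Q : 'I_M -> R) :
  FD N K L D Q -> r <= \big[Num.max/0]_m (Q m / unif M m).
Proof.
move=> /FD_iff [_ [Qh _]].
have M0 : (0 < M)%N by rewrite /M /Mdim muln_gt0 expn_gt0; lia.
have cheap : exists m : 'I_M, (m < N)%N by exists (Ordinal M0) => /=; lia.
have [m [_ Qm]] := exists_ge_const cheap Qh.
by apply: (bigmax_sup m) => //; rewrite ler_pM2r // invr_gt0 invr_gt0 nM_gt0.
Qed.

Lemma renyi_inf_min_iff (P : 'I_M -> R) : FD N K L D P ->
  (forall Q, FD N K L D Q -> renyi_inf P (unif M) <= renyi_inf Q (unif M)) <->
  (forall m, P m <= ph).
Proof.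
have pos Q : FD N K L D Q -> \big[Num.max/0]_m (Q m / unif M m) \is Num.pos.
  by move=> hQ; rewrite posrE (lt_le_trans r_gt0) ?r_le_max_ratio.
move=> hP; rewrite /renyi_inf; split=> [P_min | /max_ratio_le P_le Q hQ].
- have Pstar_le : \big[Num.max/0]_m (Pstar N K L D m / unif M m) <= r.
    apply/max_ratio_le => m; rewrite PstarE.
    by case: ifP => _; [exact: lexx | exact: pt_le_ph].
  apply/max_ratio_le; apply: le_trans Pstar_le.
  by rewrite -ler_ln ?pos ?P_min //; exact: Pstar_FD.
- by rewrite ler_ln ?pos //; apply: le_trans P_le _; exact: r_le_max_ratio.
Qed.

(* Part (ii), shape of the minimizers: a distribution of [F_D] is bounded
   by [ph] iff it equals [ph] on the cheap options, the bound being then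
   forced there by the block mass [N ph]. *)
Lemma bounded_FD_iff (P : 'I_M -> R) : FD N K L D P ->
  (forall m, P m <= ph) <->
  ((forall m : 'I_M, (m < N)%N -> P m = ph) /\
   (forall m : 'I_M, (N <= m)%N -> 0 <= P m) /\
   \sum_(m < M | (N <= m)%N) P m = x /\
   (forall m : 'I_M, (N <= m)%N -> P m <= ph)).
Proof.
move=> /FD_iff [P0 [Ph Pt]].
have -> : \sum_(m < M | (N <= m)%N) P m = x.
  by rewrite -tail_sum_pt -Pt; apply: eq_bigl => m; rewrite leqNgt.
split=> [P_le | [P_head [_ [_ P_tail]]] m]; last first.
  by case: (ltnP m N) => hm; [rewrite P_head | exact: P_tail].
split=> [m hm|]; last by do !split=> // m _.
have gap0 : \sum_(m < M | (m < N)%N) (ph - P m) = 0 by rewrite sumrB Ph subrr.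
have gap_ge0 (j : 'I_M) : (j < N)%N -> 0 <= ph - P j by rewrite subr_ge0.
have /eqP := psumr_eq0P gap_ge0 gap0 hm.
by rewrite subr_eq0 eq_sym => /eqP.
Qed.

End QueryDistributions.

Theorem lemma2 (R : realType) (N K L : nat) (D : R)
  (hN : (3 <= N)%N) (hK : (2 <= K)%N) (hL1 : (1 <= L)%N) (hL2 : (L < N - 1)%N)
  (hD1 : 1 <= D) (hD2 : D <= \sum_(k < K) (N%:R ^+ k)^-1) :
  (* (i) unique minimizer for every 0 < alpha < oo *)
  (forall a : R, 0 < a ->
     FD N K L D (Pstar N K L D) /\
     forall P : 'I_(Mdim N K L) -> R, FD N K L D P ->
       renyi a (Pstar N K L D) (unif _) <= renyi a P (unif _) /\
       (renyi a P (unif _) = renyi a (Pstar N K L D) (unif _) ->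
          forall m, P m = Pstar N K L D m)) /\
  (* (ii) characterization of minimizers for alpha = oo *)
  (forall P : 'I_(Mdim N K L) -> R, FD N K L D P ->
     ((forall Q : 'I_(Mdim N K L) -> R, FD N K L D Q ->
          renyi_inf P (unif _) <= renyi_inf Q (unif _)) <->
      ((forall m : 'I_(Mdim N K L), (m < N)%N ->
          P m = (1 - L%:R * (D - 1)) / N%:R) /\
       (forall m : 'I_(Mdim N K L), (N <= m)%N -> 0 <= P m) /\
       \sum_(m < Mdim N K L | (N <= m)%N) P m = L%:R * (D - 1) /\
       (forall m : 'I_(Mdim N K L), (N <= m)%N ->
          P m <= (1 - L%:R * (D - 1)) / N%:R)))).
Proof.
split=> [a a0 | P hP].
  split=> [|P hP]; first exact: Pstar_FD hN hK hL1 hL2 hD1 hD2.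
  exact: renyi_Pstar_min hN hK hL1 hL2 hD1 hD2 a P a0 hP.
apply: iff_trans (renyi_inf_min_iff hN hK hL1 hL2 hD1 hD2 P hP) _.
exact: bounded_FD_iff hN hK hL1 hL2 hD1 hD2 P hP.
Qed.
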